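(* Let $\mathscr{P}$ be a topological property which is closed hereditary, co-local, and preserved under finite closed sums. A locally connected Hausdorff space $X$ having $\mathscr{P}$ has a Hausdorff one-point connectification having $\mathscr{P}$ if and only if $X$ has no almost compact component.
   Context: A one-point connectification of a space $X$ is a connected space $Y$ which contains $X$ as a dense subspace and such that $Y\setminus X$ is a singleton. A space $X$ is almost compact if for every open cover $\mathscr{U}$ of $X$ there is a finite subcollection $\mathscr{V}\subseteq\mathscr{U}$ with $X=\mathrm{cl}_X\bigcup\mathscr{V}$. A topological property $\mathscr{P}$ is: closed hereditary if every closed subspace of a space with $\mathscr{P}$ has $\mathscr{P}$; preserved under finite closed sums if every space which is a finite union of closed subspaces each having $\mathscr{P}$ has $\mathscr{P}$; co-local if a space $X$ has $\mathscr{P}$ whenever there are a point $p\in X$ and an open base $\mathfrak{B}$ at $p$ such that $X\setminus B$ has $\mathscr{P}$ for every $B\in\mathfrak{B}$. *)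

From HB Require Import structures.
From mathcomp Require Import all_boot all_order all_algebra.
From mathcomp Require Import all_classical all_reals all_analysis.
Set Implicit Arguments. Unset Strict Implicit. Unset Printing Implicit Defensive.
Local Open Scope classical_set_scope.

(* A topological property: any predicate on topological spaces; subspaces of a
   space T on a set A are the sigma types [set_type A] with the subspace
   (initial) topology provided by MathComp-Analysis. *)

Definition homeomorphism (S T : topologicalType) (f : S -> T) : Prop :=
  exists g : T -> S, [/\ cancel f g, cancel g f, continuous f & continuous g].

Definition topological_property (P : topologicalType -> Prop) : Prop :=
  forall (S T : topologicalType) (f : S -> T), homeomorphism f -> P S -> P T.

Definition closed_hereditary (P : topologicalType -> Prop) : Prop :=
  forall (T : topologicalType) (A : set T), closed A -> P T -> P (set_type A).

Definition finite_closed_sums (P : topologicalType -> Prop) : Prop :=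
  forall (T : topologicalType) (F : set (set T)),
    finite_set F ->
    (forall A, F A -> closed A) ->
    (forall A, F A -> P (set_type A)) ->
    \bigcup_(A in F) A = [set: T] ->
    P T.

Definition open_base_at (T : topologicalType) (p : T) (B : set (set T)) : Prop :=
  (forall b, B b -> open b /\ b p) /\
  (forall U, nbhs p U -> exists2 b, B b & b `<=` U).

Definition co_local (P : topologicalType -> Prop) : Prop :=
  forall (T : topologicalType) (p : T) (B : set (set T)),
    open_base_at p B ->
    (forall b, B b -> P (set_type (~` b))) ->
    P T.

Definition locally_connected_space (T : topologicalType) : Prop :=
  forall (x : T) (U : set T), nbhs x U ->
    exists V : set T, [/\ open V, V x, connected V & V `<=` U].

Definition almost_compact (T : topologicalType) : Prop :=
  forall U : set (set T),
    (forall A, U A -> open A) -> \bigcup_(A in U) A = [set: T] ->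
    exists V : set (set T),
      [/\ V `<=` U, finite_set V & closure (\bigcup_(A in V) A) = [set: T]].

Definition embedding (X Y : topologicalType) (f : X -> Y) : Prop :=
  [/\ injective f, continuous f &
      forall U : set X, open U -> exists2 V : set Y, open V & f @` U = range f `&` V].

Definition one_point_connectification (X Y : topologicalType) (e : X -> Y) : Prop :=
  [/\ embedding e, connected [set: Y], dense (range e) &
      exists y : Y, ~` range e = [set y]].

(* If Y = X + {p} is a Hausdorff one-point connectification, every component C
   of X is clopen in X, so e(C) is open in Y.  If C were almost compact, e(C)
   would also be closed, since a continuous image of an almost compact set in a
   Hausdorff space is closed; this contradicts the connectedness of Y because p
   lies outside e(C).

   Conversely, fix for every component C an open cover U_C witnessing that C is
   not almost compact, and call a closed set K admissible when each K `&` C lies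
   in the closure of finitely many members of U_C.  Admissible sets form an
   ideal, and declaring their complements (together with p) to be the basic
   neighbourhoods of p yields a space Y.  No admissible set contains a whole
   component, so Y is connected and X is dense in it; every point x has an
   admissible neighbourhood, the closure of U `&` C for some U in U_C containing
   x, so Y is Hausdorff; and the complement of a basic neighbourhood of p is a
   copy of a closed subset of X, so Y has P by co-locality. *)

From HB Require Import structures.
From mathcomp Require Import all_boot all_order all_algebra.
From mathcomp Require Import all_classical all_reals all_analysis.
Local Open Scope classical_set_scope.
Set Implicit Arguments. Unset Strict Implicit. Unset Printing Implicit Defensive.

Lemma finite_subset_image (A B : choiceType) (f : A -> B) (U : set A) (W : set B) :
  finite_set W -> W `<=` f @` U ->
  exists V, [/\ V `<=` U, finite_set V & f @` V = W].
Proof.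
move=> finW WU; have [[u0 _] | U0] := pselect (U !=set0); last first.
  exists set0; split=> //; rewrite image_set0; apply/esym/seteqP; split=> // w.
  by move=> /WU[u Uu _]; apply: U0; exists u.
pose g w := xget u0 [set u | U u /\ f u = w].
have gP w : W w -> U (g w) /\ f (g w) = w.
  by move=> /WU[u Uu fuw]; exact: (@xgetI _ u0 [set u | U u /\ f u = w] u).
exists (g @` W); split; [by move=> _ [w Ww <-]; exact: (gP w Ww).1 | exact: finite_image |].
apply/seteqP; split=> [_ [_ [w Ww <-] <-]|w Ww]; first by rewrite (gP w Ww).2.
by exists (g w); [exists w | exact: (gP w Ww).2].
Qed.

Lemma closure_preimage (S T : topologicalType) (f : S -> T) (A : set T) :
  continuous f -> closure (f @^-1` A) `<=` f @^-1` closure A.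
Proof. by move=> cf x clx B /cf/clx[w [Aw Bw]]; exists (f w). Qed.

Definition almost_compact_set (X : topologicalType) (C : set X) : Prop :=
  forall U : set (set X), (forall A, U A -> open A) -> C `<=` \bigcup_(A in U) A ->
  exists V, [/\ V `<=` U, finite_set V & C `<=` closure (\bigcup_(A in V) A)].

Lemma continuous_set_val (X : topologicalType) (C : set X) :
  continuous (set_val : set_type C -> X).
Proof. exact: initial_continuous. Qed.

Lemma almost_compact_subspace_set (X : topologicalType) (C : set X) :
  almost_compact (set_type C) -> almost_compact_set C.
Proof.
move=> acC U oU CU; pose pre (A : set X) := set_val @^-1` A : set (set_type C).
have oV' B : (pre @` U) B -> open B by case=> A UA <-; exists A => //; exact: oU.
have CV' : \bigcup_(B in pre @` U) B = [set: set_type C].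
  apply/seteqP; split=> // c _; have [A UA Ac] := CU _ (set_valP c).
  by exists (pre A) => //; exists A.
have [V' [V'U finV' clV']] := acC _ oV' CV'.
have [V [VU finV defV']] := finite_subset_image finV' V'U.
exists V; split=> // c Cc.
have : closure (\bigcup_(B in V') B) (exist _ c (mem_set Cc)) by rewrite clV'.
rewrite -defV' bigcup_image -preimage_bigcup.
by move/(closure_preimage (@continuous_set_val _ C)).
Qed.

Lemma closure_set_val_open (X : topologicalType) (C : set X) (A : set X) (c : set_type C) :
  open C -> closure A (set_val c) -> closure (set_val @^-1` A) c.
Proof.
move=> oC clA B; rewrite nbhsE => -[D [oD Dc] DB]; case: oD => G oG defD.
have [w [Aw [Gw Cw]]] : (A `&` (G `&` C)) !=set0.
  apply: clA; apply: open_nbhs_nbhs; split; first exact: openI.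
  by split; [rewrite -defD in Dc | exact: set_valP].
by exists (exist _ w (mem_set Cw)); split => //; apply: DB; rewrite -defD.
Qed.

Lemma almost_compact_set_subspace (X : topologicalType) (C : set X) :
  open C -> almost_compact_set C -> almost_compact (set_type C).
Proof.
move=> oC acC U' oU' CU'; pose pre (A : set X) := set_val @^-1` A : set (set_type C).
pose U := [set G | open G /\ U' (pre G)].
have CU : C `<=` \bigcup_(G in U) G.
  move=> c Cc; have : (\bigcup_(W in U') W) (exist _ c (mem_set Cc)) by rewrite CU'.
  case=> W U'W Wc; have [G oG defW] := oU' W U'W.
  by exists G; [split; rewrite /pre ?defW | rewrite -defW in Wc].
have [V [VU finV CV]] := acC U (fun G UG => UG.1) CU.
exists (pre @` V); split; [by move=> _ [G /VU[_ U'G] <-] | exact: finite_image |].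
apply/seteqP; split=> // c _; rewrite bigcup_image -preimage_bigcup.
exact/closure_set_val_open/CV/set_valP.
Qed.

Lemma almost_compact_set_closed_image (X Y : topologicalType) (f : X -> Y) (C : set X) :
  hausdorff_space Y -> continuous f -> almost_compact_set C -> closed (f @` C).
Proof.
rewrite open_hausdorff => hY cf acC y clCy; apply: contrapT => nCy.
pose G := [set U : set X | open U /\ ~ closure (f @` U) y].
have CG : C `<=` \bigcup_(U in G) U.
  move=> c Cc; have fcy : f c != y by apply/eqP => fcy; apply: nCy; exists c.
  have [[A B] /= [/set_mem Afc /set_mem By] [oA oB /eqP AB0]] := hY _ _ fcy.
  exists (f @^-1` A) => //; split; first exact: (proj1 (continuousP f) cf).
  move=> /(_ B (open_nbhs_nbhs (conj oB By))) [_ [[x Ax <-] Bfx]].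
  by have : (A `&` B) (f x) by []; rewrite AB0.
have [V [VG finV CV]] := acC G (fun U GU => GU.1) CG.
pose N := \bigcap_(U in V) ~` closure (f @` U).
have nbhsN z : N z -> nbhs z N.
  move=> Nz; rewrite /N -(fset_setK finV); apply: filter_bigI => U.
  rewrite in_fset_set // => /set_mem VU; apply: open_nbhs_nbhs; split; last exact: Nz.
  exact/closed_openC/closed_closure.
have [_ [[c Cc <-] Nfc]] := clCy N (nbhsN y (fun U VU => (VG U VU).2)).
have [w [[U VU Uw] Nfw]] := CV c Cc _ (cf c _ (nbhsN _ Nfc)).
by apply: (Nfw U VU); apply: subset_closure; exists w.
Qed.

Lemma connectedTP (T : topologicalType) :
  connected [set: T] <-> forall B : set T, clopen B -> B !=set0 -> B = setT.
Proof.
split=> [cT B [oB cB] B0 | clT B B0 [G oG defB] [F cF defB']].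
  by apply: cT => //; exists B; rewrite ?setTI.
by apply: clT => //; split; [rewrite defB setTI | rewrite defB' setTI].
Qed.

Lemma open_connected_component (X : topologicalType) (x : X) :
  locally_connected_space X -> open (connected_component [set: X] x).
Proof.
move=> lc; rewrite openE => y Cxy.
have [V [oV Vy cV _]] := lc y setT filterT.
apply: (@filterS _ _ _ V); last exact: open_nbhs_nbhs.
by rewrite (same_connected_component Cxy); exact: connected_component_max.
Qed.

Lemma one_point_connectification_not_almost_compact (X Y : topologicalType)
    (e : X -> Y) (C : set X) :
  one_point_connectification e -> hausdorff_space Y ->
  clopen C -> C !=set0 -> ~ almost_compact_set C.
Proof.
move=> [[_ ce eopen] cY _ [p defp]] hY [oC cC] [x Cx] acC.
have oeC : open (e @` C).
  have [V oV ->] := eopen C oC; apply: openI => //.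
  rewrite -[range e]setCK defp.
  exact/closed_openC/accessible_closed_set1/hausdorff_accessible.
have eCT : e @` C = setT.
  apply: (proj1 (connectedTP Y) cY); last by exists (e x), x.
  by split => //; exact: almost_compact_set_closed_image.
have : (~` range e) p by rewrite defp.
apply; have : (e @` C) p by rewrite eCT.
by case=> c _ <-; exists c.
Qed.

Lemma embedding_image_homeomorphism (X Y : topologicalType) (f : X -> Y) (A : set X) :
  embedding f -> exists h : set_type A -> set_type (f @` A), homeomorphism h.
Proof.
move=> [finj cf fopen].
have hP (a : set_type A) : f (set_val a) \in f @` A.
  by apply/mem_set; exists (set_val a) => //; exact: set_valP.
pose h a : set_type (f @` A) := exist _ (f (set_val a)) (hP a).
pose pre (b : set_type (f @` A)) := cid2 (set_valP b).
pose g b : set_type A := exist _ (s2val (pre b)) (mem_set (s2valP (pre b))).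
have fg b : f (set_val (g b)) = set_val b := s2valP' (pre b).
exists h, g; split.
- by move=> a; apply: val_inj; apply: finj; rewrite fg.
- by move=> b; apply: val_inj; rewrite /= fg.
- apply/continuousP => _ [W oW <-]; exists (f @^-1` W) => //.
  exact: (proj1 (continuousP f) cf).
- apply/continuousP => _ [W oW <-]; have [V oV fW] := fopen W oW.
  exists V => //; apply/seteqP; split=> b /= => [Vb | Wgb].
    have : (f @` W) (f (set_val (g b))).
      by rewrite fW; split; [exists (set_val (g b)) | rewrite fg].
    by case=> a Wa /finj <-.
  have : (f @` W) (f (set_val (g b))) by exists (set_val (g b)).
  by rewrite fW fg => -[].
Qed.

Lemma clopen_connected_component_subset (T : topologicalType) (B : set T) (x y : T) :
  clopen B -> connected_component [set: T] x y -> B y ->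
  connected_component [set: T] x `<=` B.
Proof.
move=> [oB cB] Cxy By z Cz.
have CB : connected_component setT x `&` B = connected_component setT x.
  by apply: component_connected; [exists y | exists B | exists B].
by have [] : (connected_component setT x `&` B) z by rewrite CB.
Qed.

Record closed_ideal (X : topologicalType) := ClosedIdeal {
  ideal_set :> set X -> Prop;
  ideal0 : ideal_set set0;
  idealU : setU_closed ideal_set;
  ideal_closed : ideal_set `<=` closed }.

Definition one_point_extension (X : topologicalType) (I : closed_ideal X) : Type :=
  option X.

Section one_point_extension.
Context {X : topologicalType} (I : closed_ideal X).
Local Notation Y := (one_point_extension I).

HB.instance Definition _ := Choice.on Y.

Definition one_point_extension_open : set_system Y :=
  [set G | open (Some @^-1` G) /\ (G None -> exists2 K, I K & ~` K `<=` Some @^-1` G)].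
Local Notation ext_open := one_point_extension_open.

Let ext_openT : ext_open setT.
Proof. by split; [exact: openT | exists set0; [exact: ideal0 |]]. Qed.

Let ext_openI : setI_closed ext_open.
Proof.
move=> A B [oA NA] [oB NB]; split; first by rewrite preimage_setI; exact: openI.
move=> [/NA[K IK KA] /NB[L IL LB]]; exists (K `|` L); first exact: idealU.
by rewrite setCU preimage_setI; exact: setISS.
Qed.

Let ext_open_bigU (J : Type) (f : J -> set Y) :
  (forall j, ext_open (f j)) -> ext_open (\bigcup_j f j).
Proof.
move=> fo; split; first by rewrite preimage_bigcup; apply: bigcup_open => j _; exact: (fo j).1.
by move=> [j _ /(fo j).2[K IK Kf]]; exists K => // x /Kf fjx; exists j.
Qed.

HB.instance Definition _ := isOpenTopological.Build Y ext_openT ext_openI ext_open_bigU.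

Lemma preimage_Some_image (A : set X) : Some @^-1` (Some @` A : set Y) = A.
Proof. by apply/seteqP; split=> [x [y Ay [<-]] | ] //; exact: preimage_image. Qed.

Lemma open_Some_image (U : set X) : open U -> open (Some @` U : set Y).
Proof. by move=> oU; split; [rewrite preimage_Some_image | case]. Qed.

Lemma open_setC_Some_image (K : set X) : I K -> open (~` (Some @` K) : set Y).
Proof.
move=> IK; have oK : open (~` K) := closed_openC (ideal_closed IK).
split; first by rewrite -preimage_setC preimage_Some_image.
by move=> _; exists K => //; rewrite -preimage_setC preimage_Some_image.
Qed.

Lemma nbhs_NoneP (U : set Y) :
  nbhs (None : Y) U <-> exists2 K, I K & ~` (Some @` K) `<=` U.
Proof.
split=> [ [G [ [_ NG] GN GU]] | [K IK KU]].
  have [K IK KG] := NG GN; exists K => // -[x nKx | _]; last exact: GU.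
  by apply/GU/KG => Kx; apply: nKx; exists x.
by exists (~` (Some @` K)); split => //; [exact: open_setC_Some_image | case].
Qed.

Lemma nbhs_Some_image (x : X) (U : set X) : nbhs x U -> nbhs (Some x : Y) (Some @` U).
Proof.
rewrite nbhsE => -[V [oV Vx] VU]; exists (Some @` V); split; first exact: open_Some_image.
  by exists x.
exact: image_subset.
Qed.

Lemma continuous_Some : continuous (Some : X -> Y).
Proof. by apply/continuousP => G []. Qed.

Lemma embedding_Some : embedding (Some : X -> Y).
Proof.
split; [by move=> ? ? [] | exact: continuous_Some |].
move=> U oU; exists (Some @` U); first exact: open_Some_image.
by rewrite setIidr // => _ [u _ <-]; exists u.
Qed.

Lemma setC_range_Some : ~` range (Some : X -> Y) = [set None].
Proof.
apply/seteqP; split=> [[x /= nx | //] | _ -> [x _ //]].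
by exfalso; apply: nx; exists x.
Qed.

Lemma one_point_extension_connected :
  (forall K x, I K -> exists2 y, connected_component [set: X] x y & ~ K y) ->
  connected [set: Y].
Proof.
move=> meetI.
have clopen_None (B : set Y) : clopen B -> B None -> B = setT.
  move=> clB BN; have [K IK KB] := (nbhs_NoneP B).1 (open_nbhs_nbhs (conj clB.1 BN)).
  apply/seteqP; split=> // -[z|] _ //; have [y Czy nKy] := meetI K z IK.
  have KBy : B (Some y) by apply: KB => -[y' Ky' [yy']]; apply: nKy; rewrite -yy'.
  have := clopen_connected_component_subset (preimage_clopen clB continuous_Some) Czy KBy.
  by apply; apply: connected_component_refl.
apply: (proj2 (connectedTP _)) => B clB [b Bb].
have [BN | nBN] := pselect (B None); first exact: clopen_None.
have CB := clopen_None (~` B) (clopenC B clB) nBN.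
by have : (~` B) b by rewrite CB.
Qed.

Lemma one_point_extension_dense :
  (forall K, I K -> ~` K !=set0) -> dense (range (Some : X -> Y)).
Proof.
move=> nI G [[x Gx | GN]] oG; first by exists (Some x); split => //; exists x.
have [K IK KG] := (nbhs_NoneP G).1 (open_nbhs_nbhs (conj oG GN)).
have [x nKx] := nI K IK; exists (Some x); split; last by exists x.
by apply: KG => -[y Ky [yx]]; apply: nKx; rewrite -yx.
Qed.

Lemma one_point_extension_hausdorff :
  hausdorff_space X -> (forall x : X, exists2 K, I K & nbhs x K) -> hausdorff_space Y.
Proof.
move=> hX nbhsI.
have Some_None x : ~ cluster (nbhs (Some x : Y)) None.
  move=> cl; have [K IK Kx] := nbhsI x.
  have NK : nbhs (None : Y) (~` (Some @` K)) by apply/nbhs_NoneP; exists K.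
  have [_ [[k Kk <-] nKk]] := cl _ _ (nbhs_Some_image Kx) NK.
  by apply: nKk; exists k.
move=> [x|] [y|] //= cl.
- congr Some; apply: hX => U V Ux Vy.
  have [_ [[u Uu <-] [v Vv [vu]]]] := cl _ _ (nbhs_Some_image Ux) (nbhs_Some_image Vy).
  by exists u; split; rewrite // -vu.
- by case: (Some_None x).
- by case: (Some_None y) => A B Ay BN; rewrite setIC; exact: cl.
Qed.

Lemma one_point_extension_connectification :
  [set: X] !=set0 ->
  (forall K x, I K -> exists2 y, connected_component [set: X] x y & ~ K y) ->
  one_point_connectification (Some : X -> Y).
Proof.
move=> [x0 _] meetI; split; first exact: embedding_Some.
- exact: one_point_extension_connected.
- by apply: one_point_extension_dense => K IK; have [y _ nKy] := meetI K x0 IK; exists y.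
- by exists None; exact: setC_range_Some.
Qed.

Lemma one_point_extension_property (P : topologicalType -> Prop) :
  topological_property P -> closed_hereditary P -> co_local P -> P X -> P Y.
Proof.
move=> Ptop Pch Pcl PX.
apply: (Pcl _ (None : Y) [set ~` (Some @` K) | K in ideal_set I]).
- split=> [_ [K IK <-] | U /nbhs_NoneP[K IK KU]]; last by exists (~` (Some @` K)) => //; exists K.
  by split; [exact: open_setC_Some_image | case].
- move=> _ [K IK <-]; rewrite setCK.
  have [h hh] := embedding_image_homeomorphism K (@embedding_Some).
  exact: Ptop _ _ h hh (Pch _ _ (ideal_closed IK) PX).
Qed.

End one_point_extension.

Section admissible.
Context (X : topologicalType).
Local Notation component x := (connected_component [set: X] x).

Definition bad_cover (S : set X) (U : set (set X)) : Prop :=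
  [/\ forall A, U A -> open A, S `<=` \bigcup_(A in U) A &
      forall V, V `<=` U -> finite_set V -> ~ S `<=` closure (\bigcup_(A in V) A)].

(* [xget] picks a bad cover whenever one exists, and the junk value [set0] otherwise. *)
Definition component_cover (x : X) : set (set X) := xget set0 (bad_cover (component x)).

Lemma bad_component_cover (x : X) :
  ~ almost_compact_set (component x) -> bad_cover (component x) (component_cover x).
Proof.
move=> nac; apply: xgetPex; apply: contrapT => nU; apply: nac => U oU CU.
apply: contrapT => nV; apply: nU; exists U; split => // V VU finV CV.
by apply: nV; exists V.
Qed.

Definition admissible (K : set X) : Prop :=
  closed K /\ forall x, exists V, [/\ V `<=` component_cover x, finite_set V &
    K `&` component x `<=` closure (\bigcup_(A in V) A)].

Lemma admissible0 : admissible set0.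
Proof. by split=> [|x]; [exact: closed0 | exists set0; split => // ? []]. Qed.

Lemma admissibleU : setU_closed admissible.
Proof.
move=> A B [cA hA] [cB hB]; split=> [|x]; first exact: closedU.
have [V1 [V1U finV1 AV1]] := hA x; have [V2 [V2U finV2 BV2]] := hB x.
exists (V1 `|` V2); split; [by move=> U [/V1U|/V2U] | by rewrite finite_setU |].
rewrite setIUl bigcup_setU closureU; exact: setUSS.
Qed.

Lemma admissible_closed : admissible `<=` closed.
Proof. by move=> K []. Qed.

Definition admissible_ideal : closed_ideal X :=
  ClosedIdeal admissible0 admissibleU admissible_closed.

Hypothesis no_almost_compact : forall x : X, ~ almost_compact_set (component x).

Lemma admissible_meets_component (K : set X) (x : X) :
  admissible K -> exists2 y, component x y & ~ K y.
Proof.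
move=> [_ /(_ x)[V [VU finV KV]]]; have [_ _ bad] := bad_component_cover (@no_almost_compact x).
apply: contrapT => nK; apply: (bad V VU finV) => y Cy; apply: KV; split => //.
by apply: contrapT => nKy; apply: nK; exists y.
Qed.

Hypothesis lc : locally_connected_space X.

Lemma admissible_nbhs (z : X) : exists2 K, admissible K & nbhs z K.
Proof.
have [oU covU _] := bad_component_cover (@no_almost_compact z).
have Czz : component z z by exact: connected_component_refl.
have [U UU Uz] := covU z Czz.
exists (closure (U `&` component z)); last first.
  apply: (@filterS _ _ _ (U `&` component z)); first exact: subset_closure.
  apply: open_nbhs_nbhs; split; first exact: openI (oU U UU) (open_connected_component z lc).
  by split.
split=> [|x]; first exact: closed_closure.
have [Exz|NExz] := pselect (component x = component z).
  exists [set U]; split; [by move=> _ ->; rewrite /component_cover Exz | exact: finite_set1 |].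
  by move=> y [+ _]; rewrite bigcup_set1; apply: closureS => w [].
exists set0; split => // y [cly Cxy]; exfalso; apply: NExz.
have Czy : component z y.
  have cCz : closed (component z) := component_closed (x := z) closedT.
  by apply: cCz; apply: (closureS _ cly) => w [].
by rewrite (same_connected_component Cxy) (same_connected_component Czy).
Qed.

End admissible.

Unset Implicit Arguments.

Theorem theorem2p12 (P : topologicalType -> Prop)
  (HPtop : topological_property P)
  (HPch : closed_hereditary P) (HPcl : co_local P) (HPfs : finite_closed_sums P)
  (X : topologicalType) (HXne : [set: X] !=set0)
  (HXlc : locally_connected_space X) (HXh : hausdorff_space X) (HPX : P X) :
  (exists (Y : topologicalType) (e : X -> Y),
      [/\ one_point_connectification e, hausdorff_space Y & P Y]) <->
  ~ (exists x : X, almost_compact (set_type (connected_component [set: X] x))).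
Proof.
split=> [[Y [e [ope hY _]]] [x acx] | noac].
  have Cx : connected_component [set: X] x x by exact: connected_component_refl.
  apply: (one_point_connectification_not_almost_compact ope hY _ (ex_intro _ x Cx)).
    split; [exact: open_connected_component | exact: component_closed closedT].
  exact: almost_compact_subspace_set.
have no_ac (x : X) : ~ almost_compact_set (connected_component [set: X] x).
  move=> acx; apply: noac; exists x.
  exact: almost_compact_set_subspace (open_connected_component x HXlc) acx.
exists (one_point_extension (admissible_ideal X)), Some; split.
- apply: one_point_extension_connectification => // K x.
  exact: admissible_meets_component no_ac K x.
- apply: one_point_extension_hausdorff => // x; exact: admissible_nbhs no_ac HXlc x.
- exact: one_point_extension_property.
Qed.
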